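(* In the BTS-RED-Known setting, let $p=\frac{1}{4e\sqrt\pi}$ and let $S_t=\{\boldsymbol x\in\mathcal X:\Delta(\boldsymbol x)>c_t\sigma_{t-1}(\boldsymbol x)\}$ be the set of saturated points, where $\Delta(\boldsymbol x)=f(\boldsymbol x^* )-f(\boldsymbol x)$. For every $t\ge1$ and every history $\mathcal F_{t-1}$ on which $E^f(t)$ holds, $$\mathbb P\big(\boldsymbol x^{(b)}_t\in\mathcal X\setminus S_t\mid\mathcal F_{t-1}\big)\ge p-1/t^2\qquad\text{for all }b\in[b_t].$$
   Context: Setting (BTS-RED-Known). $\mathcal X$ is a finite set; $k$ is a squared-exponential kernel on $\mathcal X$ (so $k(\boldsymbol x,\boldsymbol x)=1$); the unknown objective $f:\mathcal X\to\mathbb R$ lies in the RKHS $\mathcal H_k$ with $\|f\|_{\mathcal H_k}\le B$ for a known $B>0$. A known noise variance function $\sigma^2:\mathcal X\to(0,\infty)$ has maximum value $\sigma^2_{\max}$. Querying $\boldsymbol x$ once returns $f(\boldsymbol x)+\epsilon$ with $\epsilon\sim\mathcal N(0,\sigma^2(\boldsymbol x))$, independently across queries. Fix a horizon $T$, a total budget $\mathbb B\in\mathbb N$, an effective noise variance $R^2>0$, $\delta\in(0,1)$, and $\lambda=1+2/T$. GP posterior: given data pairs $(\boldsymbol x_i,y_i)_{i=1}^m$, $\mu(\boldsymbol x)=\boldsymbol k(\boldsymbol x)^\top(\boldsymbol K+\lambda I)^{-1}\boldsymbol y$ and $s^2(\boldsymbol x,\boldsymbol x')=k(\boldsymbol x,\boldsymbol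 x')-\boldsymbol k(\boldsymbol x)^\top(\boldsymbol K+\lambda I)^{-1}\boldsymbol k(\boldsymbol x')$, with $\boldsymbol k(\boldsymbol x)=(k(\boldsymbol x,\boldsymbol x_i))_i$, $\boldsymbol K=(k(\boldsymbol x_i,\boldsymbol x_j))_{ij}$, $\boldsymbol y=(y_i)_i$. $\mu_{t-1}$ and $\sigma^2_{t-1}(\cdot,\cdot)$ denote these quantities computed from all pairs collected in iterations $1,\dots,t-1$, and $\sigma_{t-1}(\boldsymbol x)=\sqrt{\sigma^2_{t-1}(\boldsymbol x,\boldsymbol x)}$. Algorithm: in iteration $t$, for $b=1,2,\dots$: draw $f^{(b)}_t$ (independently, given the past) from the Gaussian process with mean $\mu_{t-1}$ and covariance $\beta_t^2\sigma^2_{t-1}(\cdot,\cdot)$; set $\boldsymbol x^{(b)}_t\in\arg\max_{\boldsymbol x\in\mathcal X}f^{(b)}_t(\boldsymbol x)$ and $n^{(b)}_t=\lceil\sigma^2(\boldsymbol x^{(b)}_t)/R^2\rceil$; stop at the first $b$ with $\sum_{b'\le b}n^{(b')}_t\ge\mathbb B$ and set $b_t=b-1$. Each $\boldsymbol x^{(b)}_t$, $b\in[b_t]=\{1,\dots,b_t\}$, is queried $n^{(b)}_t$ times, the empirical mean $y^{(b)}_t$ of these replicates is recorded, and the pairs $(\boldsymbol x^{(b)}_t,y^{(b)}_t)_{b\in[b_t]}$ are added to the data. $\tau_{t-1}=\sum_{t'=1}^{t-1}b_{t'}$. $\mathcal F_{t-1}$ denotes the history of all observations up to and including iteration $t-1$.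 $\Gamma_m$ is the maximum information gain $\max_{|A|\le m}\tfrac12\log\det(I+\lambda^{-1}K_A)$. $\beta_t=B+R\sqrt{2(\Gamma_{\tau_{t-1}}+1+\log(2/\delta))}$, $c_t=\beta_t(1+\sqrt{2\log(\mathbb B|\mathcal X|t^2)})$. $\boldsymbol x^*\in\arg\max_{\mathcal X}f$. $E^f(t)$ is the event that $|\mu_{t-1}(\boldsymbol x)-f(\boldsymbol x)|\le\beta_t\sigma_{t-1}(\boldsymbol x)$ for all $\boldsymbol x\in\mathcal X$. *)

From HB Require Import structures.
From mathcomp Require Import all_boot all_order all_algebra.
From mathcomp Require Import all_classical all_reals all_analysis.
Set Implicit Arguments. Unset Strict Implicit. Unset Printing Implicit Defensive.
Import Order.TTheory GRing.Theory Num.Theory.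
Local Open Scope classical_set_scope.
Local Open Scope ring_scope.

Definition se_kernel {R : realType} {dim : nat} {X : finType}
  (pt : X -> 'rV[R]_dim) (ell : R) (x y : X) : R :=
  expR (- (\sum_(i < dim) (pt x 0 i - pt y 0 i) ^+ 2) / (2 * ell ^+ 2)).

(* ||f||_{H_k} <= B on a finite X: H_k = span{k(.,y)}, with
   || sum_y a_y k(.,y) ||^2 = sum_{x,y} a_x a_y k(x,y). *)
Definition rkhs_norm_le {R : realType} {X : finType}
  (k : X -> X -> R) (f : X -> R) (B : R) : Prop :=
  exists a : X -> R, (forall x, f x = \sum_(y : X) a y * k x y) /\
    \sum_(x : X) \sum_(y : X) a x * a y * k x y <= B ^+ 2.

Definition gram {R : realType} {X : finType} (k : X -> X -> R) {m : nat}
  (xs : 'I_m -> X) : 'M[R]_m := \matrix_(i, j) k (xs i) (xs j).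

Definition kvec {R : realType} {X : finType} (k : X -> X -> R) {m : nat}
  (xs : 'I_m -> X) (x : X) : 'rV[R]_m := \row_i k x (xs i).

Definition post_mean {R : realType} {X : finType} (k : X -> X -> R) (lam : R)
  {m : nat} (xs : 'I_m -> X) (ys : 'I_m -> R) (x : X) : R :=
  (kvec k xs x *m invmx (gram k xs + lam%:M) *m (\col_i ys i)) 0 0.

Definition post_cov {R : realType} {X : finType} (k : X -> X -> R) (lam : R)
  {m : nat} (xs : 'I_m -> X) (x x' : X) : R :=
  k x x' - (kvec k xs x *m invmx (gram k xs + lam%:M) *m (kvec k xs x')^T) 0 0.

Definition post_sd {R : realType} {X : finType} (k : X -> X -> R) (lam : R)
  {m : nat} (xs : 'I_m -> X) (x : X) : R :=
  Num.sqrt (post_cov k lam xs x x).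

Definition info_gain {R : realType} {X : finType} (k : X -> X -> R) (lam : R)
  {n : nat} (s : n.-tuple X) : R :=
  2^-1 * ln (\det (1%:M + lam^-1 *: (\matrix_(i, j) k (tnth s i) (tnth s j) : 'M[R]_n))).

Definition max_info_gain {R : realType} {X : finType} (k : X -> X -> R) (lam : R)
  (m : nat) : R :=
  \big[Num.max/0]_(n < m.+1) \big[Num.max/0]_(s : n.-tuple X) info_gain k lam s.

Definition normal_law {R : realType} (mu v : R) : set R -> \bar R :=
  fun A => if v == 0 then dirac mu A else normal_prob mu (Num.sqrt v) A.

(* g is a Gaussian random vector (= GP on the finite set X) with mean mu and
   covariance C: every linear combination is normal with the right
   mean and variance. *)
Definition gaussian_vector {R : realType} {X : finType} {d : measure_display}
  {Omega : measurableType d} (P : probability Omega R)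
  (g : Omega -> X -> R) (mu : X -> R) (C : X -> X -> R) : Prop :=
  (forall x, measurable_fun setT (fun w => g w x)) /\
  forall (a : X -> R) (A : set R), measurable A ->
    P ((fun w => \sum_(x : X) a x * g w x) @^-1` A) =
    normal_law (\sum_(x : X) a x * mu x)
               (\sum_(x : X) \sum_(y : X) a x * a y * C x y) A.

From HB Require Import structures.
From mathcomp Require Import all_boot all_order all_algebra.
From mathcomp Require Import all_classical all_reals all_analysis.
From mathcomp Require Import ring lra zify measurable_realfun.
Set Implicit Arguments. Unset Strict Implicit. Unset Printing Implicit Defensive.
Import Order.TTheory GRing.Theory Num.Theory.
Local Open Scope classical_set_scope.
Local Open Scope ring_scope.

(* A normal variable exceeds its mean plus one standard
   deviation with probability at least [1 / (4 e sqrt pi)]; since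
   [f xstar <= mu xstar + beta sd xstar], we get [f xstar <= g xstar] with at
   least that probability.  By the Gaussian tail bound and a union bound,
   except with probability [#|X| expR (- a ^+ 2 / 2)] no coordinate exceeds
   [mu x + beta sd x a].  On both events the maximiser [y] of the sample
   satisfies
   [f xstar <= g xstar <= g y <= mu y + beta sd y a <= f y + beta (1 + a) sd y],
   so [y] is unsaturated.  For [a = sqrt (2 ln (Bud #|X| t ^ 2))] the
   exceptional probability is at most [1 / t ^ 2]. *)

Section normal_law.
Context {R : realType}.

(* Junk value: the square root of a negative variance is 0, and
   [normal_pdf] at standard deviation 0 is the indicator of [[0, 1]]. *)
Lemma normal_law_var_lt0 (m v : R) (A : set R) : v < 0 -> measurable A ->
  normal_law m v A = lebesgue_measure (`[0, 1]%classic `&` A).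
Proof.
move=> v_lt0 mA; rewrite /normal_law lt_eqF // ler0_sqrtr ?ltW //.
by rewrite /normal_prob /normal_pdf eqxx integral_indic.
Qed.

End normal_law.

Section gaussian_vector.
Context {R : realType} {X : finType} {d : measure_display} {Omega : measurableType d}.
Variables (P : probability Omega R) (g : Omega -> X -> R) (mu : X -> R) (C : X -> X -> R).
Hypothesis gv : gaussian_vector P g mu C.

Let sum_scaled_delta (x : X) (r : R) (F : X -> R) :
  \sum_(y : X) r * (y == x)%:R * F y = r * F x.
Proof.
rewrite (bigD1 x) //= eqxx mulr1 big1 ?addr0 // => y /negbTE ->.
by rewrite mulr0 mul0r.
Qed.

Lemma gaussian_vector_coord (x : X) (r : R) (A : set R) : measurable A ->
  P ((fun w => r * g w x) @^-1` A) = normal_law (r * mu x) (r ^+ 2 * C x x) A.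
Proof.
move=> mA; have [_ /(_ (fun y => r * (y == x)%:R) A mA)] := gv.
under eq_fun do rewrite sum_scaled_delta.
rewrite sum_scaled_delta => ->; congr normal_law.
under eq_bigr do under eq_bigr do rewrite -mulrA.
under eq_bigr do rewrite -mulr_sumr sum_scaled_delta.
by rewrite sum_scaled_delta mulrA.
Qed.

(* Otherwise [g x] and [- g x] would both lie in ]0, 1] almost surely. *)
Lemma gaussian_vector_var_ge0 (x : X) : 0 <= C x x.
Proof.
rewrite leNgt; apply/negP => Cx_lt0.
pose E r := (fun w => r * g w x) @^-1` (`]0, 1]%classic : set R).
have mE r : measurable (E r).
  rewrite -[E r]setTI; apply: measurable_realfun.measurable_funM => //; exact: gv.1.
have PE r : r ^+ 2 = 1 -> P (E r) = 1%E.
  move=> r2; rewrite /E gaussian_vector_coord // r2 mul1r.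
  rewrite normal_law_var_lt0 // setIidr; last first.
    by move=> y /=; rewrite !in_itv /= => /andP[/ltW -> ->].
  by rewrite lebesgue_measure_itv /= lte_fin ltr01 oppr0 adde0.
have E_disj : E 1 `&` E (-1) = set0.
  rewrite /E; apply/seteqP; split => // w /= []; rewrite !in_itv /= mul1r mulN1r.
  by move=> /andP[+ _] /andP[+ _]; lra.
have : (P (E 1%R `|` E (-1)%R) <= 1)%E.
  by apply: probability_le1; exact: measurableU.
rewrite measureU // [X in (X + _)%R]PE ?expr1n // [X in (_ + X)%R]PE ?sqrrN ?expr1n //.
by rewrite -EFinD lee_fin; lra.
Qed.

End gaussian_vector.

Section normal_bounds.
Context {R : realType}.

Lemma normal_pdf_peakE (m s x : R) : s != 0 ->
  normal_pdf m s x = normal_peak s * normal_fun m s x.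
Proof. by move=> s_neq0; rewrite /normal_pdf (negbTE s_neq0). Qed.

Lemma normal_law_sqr (m s : R) (A : set R) : 0 <= s ->
  normal_law m (s ^+ 2) A = if s == 0 then \d_m A else normal_prob m s A.
Proof. by move=> s_ge0; rewrite /normal_law sqrf_eq0 sqrtr_sqr ger0_norm. Qed.

Lemma normal_pdf_le_shift (m s a x : R) : 0 < s -> 0 <= a -> m + s * a <= x ->
  normal_pdf m s x <= expR (- a ^+ 2 / 2) * normal_pdf (m + s * a) s x.
Proof.
move=> s_gt0 a_ge0 hx; have s_neq0 : s != 0 by rewrite gt_eqF.
rewrite !normal_pdf_peakE // mulrCA ler_pM2l ?normal_peak_gt0 //.
rewrite /normal_fun -expRD ler_expR.
have cross : 0 <= s * a * (x - (m + s * a)).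
  by rewrite !mulr_ge0 ?subr_ge0 // ltW.
have s2_gt0 : 0 < s ^+ 2 *+ 2 by rewrite pmulrn_lgt0 // exprn_gt0.
have -> : - a ^+ 2 / 2 + - (x - (m + s * a)) ^+ 2 / (s ^+ 2 *+ 2)
        = - ((x - (m + s * a)) ^+ 2 + (s * a) ^+ 2) / (s ^+ 2 *+ 2).
  by field.
by rewrite !mulNr lerN2 ler_pM2r ?invr_gt0 //; nra.
Qed.

(* Shifting the mean to the threshold costs the factor [expR (- a ^+ 2 / 2)]
   on the whole tail. *)
Lemma normal_prob_tail_le (m s a : R) : 0 < s -> 0 <= a ->
  (normal_prob m s `](m + s * a)%R, +oo[ <= (expR (- a ^+ 2 / 2))%:E)%E.
Proof.
move=> s_gt0 a_ge0; set c := expR (- a ^+ 2 / 2).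
set I := (`](m + s * a)%R, +oo[%classic : set R).
have mI : measurable I by exact: measurable_itv.
apply: (@le_trans _ _ (\int[lebesgue_measure]_(x in I)
                         (c * normal_pdf (m + s * a) s x)%:E)%E).
  apply: ge0_le_integral => //.
  - by move=> x _; rewrite lee_fin normal_pdf_ge0.
  - by apply/measurable_EFinP; apply: measurable_funTS; exact: measurable_normal_pdf.
  - apply/measurable_EFinP; apply: measurable_funTS.
    by apply: measurable_realfun.measurable_funM => //; exact: measurable_normal_pdf.
  move=> x; rewrite /I /= in_itv /= andbT => /ltW hx.
  by rewrite lee_fin normal_pdf_le_shift.
under eq_integral do rewrite EFinM.
rewrite ge0_integralZl //; last first.
- by rewrite lee_fin expR_ge0.
- by move=> x _; rewrite lee_fin normal_pdf_ge0.
- by apply/measurable_EFinP; apply: measurable_funTS; exact: measurable_normal_pdf.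
rewrite -[leRHS]mule1 lee_wpmul2l ?lee_fin ?expR_ge0 //.
exact: (@probability_le1 _ _ _ (normal_prob (m + s * a) s)).
Qed.

Lemma normal_law_tail_le (m s a : R) : 0 <= s -> 0 <= a ->
  (normal_law m (s ^+ 2) `](m + s * a)%R, +oo[ <= (expR (- a ^+ 2 / 2))%:E)%E.
Proof.
move=> s_ge0 a_ge0; rewrite normal_law_sqr //.
have [->|s_neq0] := eqVneq s 0; last first.
  by apply: normal_prob_tail_le; rewrite // lt_neqAle eq_sym s_neq0.
by rewrite diracE mul0r addr0 memNset ?lee_fin ?expR_ge0 //= in_itv /= ltxx.
Qed.

Lemma normal_prob_ge_density (m s b : R) (J : set R) : 0 < s -> measurable J ->
  (forall x, J x -> (x - m) ^+ 2 <= (s * b) ^+ 2) ->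
  ((normal_peak s * expR (- b ^+ 2 / 2))%:E * lebesgue_measure J
     <= normal_prob m s J)%E.
Proof.
move=> s_gt0 mJ hJ; have s_neq0 : s != 0 by rewrite gt_eqF.
rewrite -integral_cst //; apply: ge0_le_integral => //.
- by move=> x _; rewrite lee_fin mulr_ge0 ?normal_peak_ge0 ?expR_ge0.
- by apply/measurable_EFinP; apply: measurable_funTS; exact: measurable_normal_pdf.
move=> x /hJ hx; rewrite lee_fin normal_pdf_peakE // ler_pM2l ?normal_peak_gt0 //.
rewrite /normal_fun ler_expR.
have s2_gt0 : 0 < s ^+ 2 *+ 2 by rewrite pmulrn_lgt0 // exprn_gt0.
have -> : - b ^+ 2 / 2 = - (s * b) ^+ 2 / (s ^+ 2 *+ 2) by field; rewrite gt_eqF.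
by rewrite !mulNr lerN2 ler_pM2r ?invr_gt0.
Qed.

Lemma sqrt_pi_ge1 : 1 <= Num.sqrt (pi : R).
Proof. by rewrite -sqrtr1 ler_sqrt ?pi_ge0 // (le_trans _ (@pi_ge2 R)) // ler1n. Qed.

Lemma inv_4e_sqrt_pi_le1 : 1 / (4 * expR 1 * Num.sqrt (pi : R)) <= 1.
Proof.
have e_ge2 : 2 <= expR (1 : R) by have := expR_ge1Dx (1 : R); lra.
have := sqrt_pi_ge1; rewrite ler_pdivrMr ?mul1r; last first.
  by rewrite !mulr_gt0 ?sqrtr_gt0 ?pi_gt0 //; lra.
nra.
Qed.

(* Uses [sqrt 2 <= 3 / 2] and [7 / 8 <= expR (- 1 / 8)], leaving a factor 7/6. *)
Lemma inv_4e_sqrt_pi_le (s : R) : 0 < s ->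
  1 / (4 * expR 1 * Num.sqrt pi) <= normal_peak s * expR (- (3 / 2) ^+ 2 / 2) * (s / 2).
Proof.
move=> s_gt0; set q := Num.sqrt (pi : R); set e := expR (1 : R).
have q_gt0 : 0 < q by rewrite sqrtr_gt0 pi_gt0.
have e_gt0 : 0 < e by exact: expR_gt0.
have sq_gt0 : 0 < 3 / 2 * s * q by rewrite !mulr_gt0.
have sqrt_le : Num.sqrt (s ^+ 2 * pi *+ 2) <= 3 / 2 * s * q.
  have -> : 3 / 2 * s * q = Num.sqrt ((3 / 2 * s * q) ^+ 2).
    by rewrite sqrtr_sqr ger0_norm // ltW.
  rewrite ler_sqrt ?sqr_ge0 // !exprMn /q sqr_sqrtr ?pi_ge0 // -mulr_natr.
  have := @pi_ge0 R; have := sqr_ge0 s; nra.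
have peak_ge : (3 / 2 * s * q)^-1 <= normal_peak s.
  rewrite /normal_peak lef_pV2 // posrE sqrtr_gt0.
  by rewrite pmulrn_lgt0 // mulr_gt0 ?pi_gt0 // exprn_gt0.
have exp_ge : 7 / 8 / e <= expR (- (3 / 2) ^+ 2 / 2).
  have -> : - (3 / 2) ^+ 2 / 2 = - (1 / 8) - 1 :> R by field.
  rewrite expRB ler_pM2r ?invr_gt0 //.
  by have := expR_ge1Dx (- (1 / 8) : R); lra.
apply: (@le_trans _ _ ((3 / 2 * s * q)^-1 * (7 / 8 / e) * (s / 2))).
  have -> : (3 / 2 * s * q)^-1 * (7 / 8 / e) * (s / 2) = 1 / (4 * e * q) * (7 / 6).
    by field; rewrite !gt_eqF.
  by rewrite ler_peMr ?divr_ge0 ?mulr_ge0 ?ltW //; lra.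
rewrite ler_pM2r ?divr_gt0 //; apply: ler_pM => //.
- by rewrite invr_ge0 ltW.
- by rewrite divr_ge0 ?ltW //; lra.
Qed.

(* The mass of [[m + s, m + 3 s / 2]] alone suffices. *)
Lemma normal_prob_ge_one_sd (m s y : R) : 0 < s -> y <= m + s ->
  ((1 / (4 * expR 1 * Num.sqrt pi))%:E <= normal_prob m s `[y, +oo[)%E.
Proof.
move=> s_gt0 hy; pose J := `[(m + s)%R, (m + s * (3 / 2))%R]%classic.
have mJ : measurable J by exact: measurable_itv.
have J_len : lebesgue_measure J = (s / 2)%:E.
  rewrite /J lebesgue_measure_itv /= lte_fin ifT; last by nra.
  by rewrite -EFinD; congr EFin; field.
apply: (@le_trans _ _ (normal_prob m s J)); last first.
  apply: le_measure; rewrite ?inE //.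
  by move=> x; rewrite /J /= !in_itv /= andbT => /andP[/(le_trans hy) ->].
have J_dev x : J x -> (x - m) ^+ 2 <= (s * (3 / 2)) ^+ 2.
  by rewrite /J /= in_itv /= => /andP[h1 h2]; nra.
apply: le_trans (normal_prob_ge_density s_gt0 mJ J_dev).
by rewrite J_len -EFinM lee_fin inv_4e_sqrt_pi_le.
Qed.

Lemma normal_law_ge_one_sd (m s y : R) : 0 <= s -> y <= m + s ->
  ((1 / (4 * expR 1 * Num.sqrt pi))%:E <= normal_law m (s ^+ 2) `[y, +oo[)%E.
Proof.
move=> s_ge0 hy; rewrite normal_law_sqr //.
have [s0|s_neq0] := eqVneq s 0; last first.
  by apply: normal_prob_ge_one_sd; rewrite // lt_neqAle eq_sym s_neq0.
rewrite diracE mem_set ?lee_fin ?inv_4e_sqrt_pi_le1 //=.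
by rewrite in_itv /= andbT; rewrite s0 addr0 in hy.
Qed.

End normal_bounds.

Section thompson_sample.
Context {R : realType} {X : finType} {d : measure_display} {Omega : measurableType d}.
Variables (P : probability Omega R) (g : Omega -> X -> R) (mu f : X -> R).
Variables (C : X -> X -> R) (beta a : R) (xstar : X) (sel : (X -> R) -> X).
Let sd x := Num.sqrt (C x x).
Hypotheses (beta_gt0 : 0 < beta) (a_ge0 : 0 <= a).
Hypothesis gv : gaussian_vector P g mu (fun x y => beta ^+ 2 * C x y).
Hypothesis mu_conc : forall x, `|mu x - f x| <= beta * sd x.
Hypothesis sel_max : forall (h : X -> R) x, h x <= h (sel h).

Let unsaturated x := ~ (f xstar - f x > beta * (1 + a) * sd x).
Let top_high := (fun w => g w xstar) @^-1` (`[f xstar, +oo[%classic : set R).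
Let exceeds x := (fun w => g w x) @^-1` (`](mu x + beta * sd x * a)%R, +oo[%classic : set R).

Let coord_law x (A : set R) : measurable A ->
  P ((fun w => g w x) @^-1` A) = normal_law (mu x) ((beta * sd x) ^+ 2) A.
Proof.
move=> mA; transitivity (P ((fun w => 1 * g w x) @^-1` A)).
  by congr (P _); apply/seteqP; split => w /=; rewrite mul1r.
rewrite (gaussian_vector_coord gv x 1 mA).
have C_ge0 : 0 <= C x x.
  by have := gaussian_vector_var_ge0 gv x; rewrite pmulr_rge0 // exprn_gt0.
by rewrite expr1n !mul1r exprMn /sd sqr_sqrtr.
Qed.

Let measurable_coord x (A : set R) : measurable A ->
  measurable ((fun w => g w x) @^-1` A).
Proof. by move=> mA; rewrite -[_ @^-1` _]setTI; exact: gv.1. Qed.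

Let sd_ge0 x : 0 <= beta * sd x.
Proof. by rewrite mulr_ge0 ?sqrtr_ge0 ?ltW. Qed.

Let unsaturated_sel w : top_high w -> (forall x, ~ exceeds x w) ->
  unsaturated (sel (g w)).
Proof.
rewrite /top_high /= in_itv /= andbT => top_le none_exceeds; set y := sel (g w).
have g_le : g w y <= mu y + beta * sd y * a.
  by rewrite leNgt; apply/negP => h; apply: (none_exceeds y); rewrite /exceeds /= in_itv /= h.
have mu_le : mu y <= f y + beta * sd y.
  by have := mu_conc y; have := ler_norm (mu y - f y); lra.
have := sel_max (g w) xstar; rewrite -/y /unsaturated => sel_ge.
have -> : beta * (1 + a) * sd y = beta * sd y + beta * sd y * a by ring.
lra.
Qed.

Let prob_top_high : ((1 / (4 * expR 1 * Num.sqrt pi))%:E <= P top_high)%E.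
Proof.
rewrite coord_law //; apply: normal_law_ge_one_sd => //.
by have := mu_conc xstar; have := ler_norm (f xstar - mu xstar); rewrite distrC; lra.
Qed.

Let some_exceeds_bigsetU : [set w | exists x, exceeds x w] =
  \big[setU/set0]_(n < #|X|) exceeds (nth xstar (enum X) n).
Proof.
rewrite -(bigcup_mkord _ (fun n => exceeds (nth xstar (enum X) n))).
apply/seteqP; split => w /=.
  move=> [x ex]; exists (index x (enum X)); last by rewrite nth_index ?mem_enum.
  by rewrite /= cardT index_mem mem_enum.
by move=> [n _ ex]; exists (nth xstar (enum X) n).
Qed.

Let measurable_exceeds x : measurable (exceeds x).
Proof. by apply: measurable_coord; exact: measurable_itv. Qed.

Let prob_some_exceeds :
  (P [set w | exists x, exceeds x w] <= (#|X|%:R * expR (- a ^+ 2 / 2))%:E)%E.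
Proof.
rewrite some_exceeds_bigsetU.
apply: le_trans (Boole_inequality P (A := fun n => exceeds (nth xstar (enum X) n)) _) _.
  by move=> n _; exact: measurable_exceeds.
apply: (@le_trans _ _ (\sum_(n < #|X|) (expR (- a ^+ 2 / 2))%:E)%E).
  apply: lee_sum => n _; rewrite /exceeds.
  apply: le_trans (normal_law_tail_le _ (sd_ge0 _) a_ge0).
  by rewrite [leLHS]coord_law //; exact: measurable_itv.
by rewrite sumEFin sumr_const card_ord mulr_natl.
Qed.

Lemma thompson_sample_unsaturated_prob :
  measurable [set w | unsaturated (sel (g w))] ->
  ((1 / (4 * expR 1 * Num.sqrt pi) - #|X|%:R * expR (- a ^+ 2 / 2))%:E
     <= P [set w | unsaturated (sel (g w))])%E.
Proof.
move=> m_unsat.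
have m_some_exceeds : measurable [set w | exists x, exceeds x w].
  by rewrite some_exceeds_bigsetU; apply: bigsetU_measurable.
have top_high_sub : top_high `<=`
    [set w | unsaturated (sel (g w))] `|` [set w | exists x, exceeds x w].
  move=> w w_high; have [?|none] := pselect (exists x, exceeds x w); first by right.
  by left; apply: unsaturated_sel => // x ex; apply: none; exists x.
rewrite EFinB leeBlDr //; apply: le_trans prob_top_high _.
apply: le_trans (le_measure _ _ _ top_high_sub) _; rewrite ?inE //.
  - exact: measurable_coord.
  - exact: measurableU.
apply: le_trans (measureU2 _ m_unsat m_some_exceeds) _.
exact: leeD2l prob_some_exceeds.
Qed.

End thompson_sample.

Lemma expR_sqr_sqrt_ln {R : realType} (N : R) : 1 <= N ->
  expR (- Num.sqrt (2 * ln N) ^+ 2 / 2) = N^-1.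
Proof.
move=> N_ge1; rewrite sqr_sqrtr ?mulr_ge0 ?ln_ge0 //.
have -> : - (2 * ln N) / 2 = - ln N by field.
by rewrite expRN lnK // posrE; lra.
Qed.

Theorem mainTheorem5 (R : realType) (dim : nat) (X : finType)
  (pt : X -> 'rV[R]_dim) (ell : R) (f : X -> R) (B : R)
  (noisevar : X -> R) (T Bud : nat) (R2 delta : R) (t : nat)
  (m : nat) (xs : 'I_m -> X) (ys : 'I_m -> R) (xstar : X)
  (dO : measure_display) (Omega : measurableType dO) (P : probability Omega R)
  (g : Omega -> X -> R) (sel : (X -> R) -> X) :
  let k := se_kernel pt ell in
  let lam := 1 + 2 / T%:R in
  let beta := B + Num.sqrt R2 *
      Num.sqrt (2 * (max_info_gain k lam m + 1 + ln (2 / delta))) in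
  let c := beta * (1 + Num.sqrt (2 * ln (Bud%:R * #|X|%:R * t%:R ^+ 2))) in
  let mu := post_mean k lam xs ys in
  let sd := post_sd k lam xs in
  let S := fun x => f xstar - f x > c * sd x in
  injective pt -> 0 < ell ->
  0 < B -> rkhs_norm_le k f B ->
  (forall x, 0 < noisevar x) ->
  (0 < T)%N -> (0 < Bud)%N -> 0 < R2 -> 0 < delta < 1 -> (1 <= t)%N ->
  (forall x, f x <= f xstar) ->
  (forall x, `|mu x - f x| <= beta * sd x) ->
  gaussian_vector P g mu (fun x x' => beta ^+ 2 * post_cov k lam xs x x') ->
  (forall (h : X -> R) (x : X), h x <= h (sel h)) ->
  measurable [set w | ~ S (sel (g w))] ->
  ((1 / (4 * expR 1 * Num.sqrt pi) - 1 / t%:R ^+ 2)%:E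
     <= P [set w | ~ S (sel (g w))])%E.
Proof.
move=> k lam beta c mu sd S _ _ B_gt0 _ _ _ Bud_gt0 _ _ t_gt0 _ mu_conc gv sel_max m_unsat.
have beta_gt0 : 0 < beta.
  by rewrite (lt_le_trans B_gt0) // lerDl mulr_ge0 ?sqrtr_ge0.
have X_gt0 : (0 < #|X|)%N by apply/card_gt0P; exists xstar.
set N : R := Bud%:R * #|X|%:R * t%:R ^+ 2.
have N_ge1 : 1 <= N.
  by rewrite /N -natrX -!natrM ler1n; move: Bud_gt0 X_gt0 t_gt0; clear; nia.
apply: le_trans (thompson_sample_unsaturated_prob beta_gt0 (sqrtr_ge0 _) gv
                   mu_conc sel_max m_unsat).
rewrite lee_fin lerD2l lerN2 expR_sqr_sqrt_ln // /N.
have -> : #|X|%:R * (Bud%:R * #|X|%:R * t%:R ^+ 2)^-1 = Bud%:R^-1 / t%:R ^+ 2 :> R.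
  by field; rewrite !pnatr_eq0 -!lt0n Bud_gt0 X_gt0 t_gt0.
by rewrite ler_pM2r ?invr_gt0 ?exprn_gt0 ?ltr0n // invf_le1 ?ler1n // ltr0n.
Qed.
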